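(* Let $q$ be a prime power, $k\ge 2$, and let $D\subseteq\mathbb{F}_q^k\setminus\{0\}$ be a set with $aD=D$ for all $a\in\mathbb{F}_q^*$ and $\#D=n$. Let $\widetilde{[D,D]}=\{(\mathbf{x},1):\mathbf{x}\in D\}\cup\{(\mathbf{x},0):\mathbf{x}\in D\}\subseteq\mathbb{F}_q^{k+1}$. For a linear form $H=\alpha_1x_1+\cdots+\alpha_kx_k+\alpha_{k+1}x_{k+1}$ on $\mathbb{F}_q^{k+1}$, let $\widetilde H=\alpha_1x_1+\cdots+\alpha_kx_k$, let $c_{\widetilde H}=(\widetilde H(\mathbf{x}))_{\mathbf{x}\in D}\in\mathrm{C}_D$, and let $c_H=(c_{H,0},c_{H,1})\in\mathrm{C}_{\widetilde{[D,D]}}$ where $c_{H,0}=(H(\mathbf{x},0))_{\mathbf{x}\in D}$ and $c_{H,1}=(H(\mathbf{x},1))_{\mathbf{x}\in D}$. Then: (i) if $\alpha_{k+1}=0$, then $\mathrm{w}(c_{H,1})=\mathrm{w}(c_{H,0})$ and $\mathrm{w}(c_H)=2\,\mathrm{w}(c_{\widetilde H})$; (ii) if $\alpha_{k+1}\ne 0$, then $\mathrm{w}(c_H)=n+\frac{q-2}{q-1}\mathrm{w}(c_{\widetilde H})$.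
   Context: For a finite ordered set $D=\{P_1,\ldots,P_n\}\subseteq\mathbb{F}_q^k$, $\mathrm{C}_D=\{(f(P_1),\ldots,f(P_n)):f \text{ linear form on }\mathbb{F}_q^k\}$. $\mathrm{w}$ denotes Hamming weight. *)

From HB Require Import structures.
From mathcomp Require Import all_boot all_order all_algebra all_field.
Set Implicit Arguments. Unset Strict Implicit. Unset Printing Implicit Defensive.
Import GRing.Theory.
Local Open Scope ring_scope.

Definition lform (F : finFieldType) (m : nat) (alpha : 'rV[F]_m) (v : 'rV[F]_m) : F :=
  \sum_(i < m) alpha 0 i * v 0 i.

(* Hamming weight of the codeword (f(P))_{P in S}: number of P in S with f P <> 0.
   (The weight does not depend on the chosen ordering of S.) *)
Definition wt (T : finType) (F : finFieldType) (S : {set T}) (f : T -> F) : nat :=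
  #|[set P in S | f P != 0]|.

Definition ext (F : finFieldType) (k : nat) (x : 'rV[F]_k) (t : F) : 'rV[F]_(k + 1) :=
  row_mx x (const_mx t).

Definition DDt (F : finFieldType) (k : nat) (D : {set 'rV[F]_k}) : {set 'rV[F]_(k + 1)} :=
  [set ext x 1 | x in D] :|: [set ext x 0 | x in D].

(* With a = alpha_(k+1) we have H(x,t) = Ht(x) + a t, and c_H is the
   concatenation of (H(x,1))_x and (H(x,0))_x; the latter is always c_Ht.
   If a != 0, the former vanishes exactly on the fibre Ht^-1(-a).  Since D is
   stable under nonzero scalars and Ht is linear, all fibres of Ht over
   nonzero values have the same size N, so w(c_Ht) = (q - 1) N and
   w(c_H) = (n - N) + (q - 1) N = n + (q - 2) N. *)
From HB Require Import structures.
From mathcomp Require Import all_boot all_order all_algebra all_field.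
From mathcomp Require Import ring.
Set Implicit Arguments. Unset Strict Implicit. Unset Printing Implicit Defensive.
Import GRing.Theory Num.Theory.
Local Open Scope ring_scope.

Lemma lform_ext (F : finFieldType) (k : nat) (alpha : 'rV[F]_(k + 1)) x t :
  lform alpha (ext x t) = lform (lsubmx alpha) x + rsubmx alpha 0 0 * t.
Proof.
rewrite /lform /ext big_split_ord /= big_ord1; congr (_ + _).
  by apply: eq_bigr => i _; rewrite row_mxEl !mxE.
by rewrite row_mxEr !mxE.
Qed.

Lemma lformZ (F : finFieldType) (k : nat) (b : 'rV[F]_k) c x :
  lform b (c *: x) = c * lform b x.
Proof. by rewrite /lform mulr_sumr; apply: eq_bigr => i _; rewrite mxE mulrCA. Qed.

Lemma ext_inj (F : finFieldType) (k : nat) (t : F) :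
  injective (fun x : 'rV[F]_k => ext x t).
Proof. by move=> x y /eq_row_mx []. Qed.

Lemma ext_inj_last (F : finFieldType) (k : nat) (x y : 'rV[F]_k) s t :
  ext x s = ext y t -> s = t.
Proof. by move=> /eq_row_mx [_ /matrixP /(_ 0 0)]; rewrite !mxE. Qed.

Lemma wt_imset (T U : finType) (F : finFieldType) (g : T -> U) (D : {set T})
    (f : U -> F) :
  injective g -> wt (g @: D) f = wt D (f \o g).
Proof.
move=> g_inj; rewrite /wt -(card_imset _ g_inj); apply: eq_card => P.
rewrite !inE; apply/andP/imsetP => [[/imsetP [x xD ->] fx] | [x]].
  by exists x; rewrite ?inE ?xD.
by rewrite inE => /andP [xD fx] ->; rewrite imset_f.
Qed.

Lemma wt_setU (T : finType) (F : finFieldType) (A B : {set T}) (f : T -> F) :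
  [disjoint A & B] -> wt (A :|: B) f = (wt A f + wt B f)%N.
Proof.
move=> AB; rewrite /wt -cardsUI.
have -> : [set P in A :|: B | f P != 0]
    = [set P in A | f P != 0] :|: [set P in B | f P != 0].
  by apply/setP => P; rewrite !inE andb_orl.
suff -> : [set P in A | f P != 0] :&: [set P in B | f P != 0] = set0.
  by rewrite cards0 addn0.
apply/setP => P; move/setP/(_ P): (disjoint_setI0 AB).
by rewrite !inE andbACA => ->.
Qed.

Lemma wt_DDt (F : finFieldType) (k : nat) (D : {set 'rV[F]_k})
    (f : 'rV[F]_(k + 1) -> F) :
  wt (DDt D) f = (wt D (fun x => f (ext x 1%R)) + wt D (fun x => f (ext x 0%R)))%N.
Proof.
rewrite wt_setU ?wt_imset //; try exact: ext_inj.
apply/pred0P => P /=; apply/negbTE/andP => [[/imsetP [x _ ->] /imsetP [y _]]].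
by move/ext_inj_last/eqP; rewrite oner_eq0.
Qed.

Section ScalarStableFibres.

Variables (F : finFieldType) (k : nat) (D : {set 'rV[F]_k}).
Hypothesis D_scale : forall a : F, a != 0 -> [set a *: x | x in D] = D.
Variable h : 'rV[F]_k -> F.
Hypothesis hZ : forall c x, h (c *: x) = c * h x.

Definition fibre c := [set x in D | h x == c].

Lemma fibre_sub c : fibre c \subset D.
Proof. by apply/subsetP => x; rewrite inE => /andP []. Qed.

Lemma card_fibre c : c != 0 -> #|fibre c| = #|fibre 1|.
Proof.
move=> c0; rewrite -[RHS](card_imset _ (scalerI c0)); apply: eq_card => y.
rewrite !inE; apply/andP/imsetP => [[yD /eqP hy] | [x]].
  exists (c^-1 *: y); last by rewrite scalerA divff // scale1r.
  rewrite inE hZ hy mulVf // eqxx andbT.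
  by rewrite -(D_scale (invr_neq0 c0)) imset_f.
rewrite inE => /andP [xD /eqP hx] ->.
by rewrite -{1}(D_scale c0) imset_f // hZ hx mulr1.
Qed.

Lemma wt_fibre : wt D h = ((#|F| - 1) * #|fibre 1%R|)%N.
Proof.
rewrite /wt -sum1_card (partition_big h (fun c => c != 0)) /=; last first.
  by move=> x; rewrite inE => /andP [].
rewrite subn1 -(cardC1 0) -sum_nat_const; apply: eq_big => // c c0.
rewrite -(card_fibre c0) -sum1_card; apply: eq_bigl => x; rewrite !inE.
by case: (x \in D) => //=; case: (h x =P c) => [->|]; rewrite ?c0 ?andbF.
Qed.

Lemma wt_shift a : a != 0 -> wt D (fun x => h x + a) = (#|D| - #|fibre 1%R|)%N.
Proof.
move=> a0; rewrite /wt; have -> : [set x in D | h x + a != 0] = D :\: fibre (- a).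
  by apply/setP => x; rewrite !inE addr_eq0; case: (x \in D); rewrite ?andbT.
have na0 : - a != 0 by rewrite oppr_eq0.
by rewrite cardsD (setIidPr (fibre_sub _)) (card_fibre na0).
Qed.

End ScalarStableFibres.

Theorem proposition5p1 (F : finFieldType) (k : nat) (D : {set 'rV[F]_k})
    (alpha : 'rV[F]_(k + 1)) :
  (2 <= k)%N ->
  (0 : 'rV[F]_k) \notin D ->
  (forall a : F, a != 0 -> [set a *: x | x in D] = D) ->
  let n := #|D| in
  let H := lform alpha in
  let Ht := lform (lsubmx alpha) in
  let a_last := rsubmx alpha 0 0 in
  (a_last = 0 ->
     wt D (fun x => H (ext x 1)) = wt D (fun x => H (ext x 0)) /\
     wt (DDt D) H = (2 * wt D Ht)%N) /\
  (a_last != 0 ->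
     (wt (DDt D) H)%:R = n%:R + ((#|F| - 2)%:R / (#|F| - 1)%:R) * (wt D Ht)%:R :> rat).
Proof.
move=> _ _ D_scale n H Ht a.
have wt_ext_Ht t : a * t = 0 -> wt D (fun x => H (ext x t)) = wt D Ht.
  by move=> at0; apply: eq_card => x; rewrite !inE /H lform_ext at0 addr0.
split=> [a0 | a_neq0].
  by rewrite wt_DDt !wt_ext_Ht ?a0 ?mul0r // addnn -mul2n.
have wt_ext1 : wt D (fun x => H (ext x 1)) = wt D (fun x => Ht x + a).
  by apply: eq_card => x; rewrite !inE /H lform_ext mulr1.
have HtZ := @lformZ F k (lsubmx alpha).
rewrite wt_DDt wt_ext1 (wt_ext_Ht 0) ?mulr0 //.
rewrite (wt_shift D_scale HtZ a_neq0) (wt_fibre D_scale HtZ).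
have q_gt1 : (1 < #|F|)%N := card_finNzRing_gt1 F.
have q1_neq0 : (#|F| - 1)%:R != 0 :> rat by rewrite pnatr_eq0 subn_eq0 -ltnNge.
rewrite natrD natrB ?subset_leq_card ?fibre_sub // natrM mulrA divfK //.
rewrite !natrB // ?(ltnW q_gt1) //.
by move: (n%:R : rat) (#|fibre D Ht 1|%:R : rat) (#|F|%:R : rat) => u v w; ring.
Qed.
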